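(* Let $(G_n)$ be a sequence of finite connected graphs, $G_n$ having $n$ vertices, all satisfying (bal) with a fixed parameter $D$. Let $(r_n)$ and $(t_n)$ be sequences of positive integers such that $r_n/(\log(n)\, t_{\mathrm{mix}}(G_n))\to\infty$ and $t_n/r_n\to1$. Then there is $n_0$ such that for all $n\ge n_0$, every vertex $u$ of $G_n$ and every nonempty vertex set $U$ of $G_n$, $$\Pr_u(\tau_U<t_n)\ge \tfrac13\,\mathrm{Cap}_{r_n}(U).$$
   Context: For a finite connected graph $G=(V,E)$, $d(v)$ is the degree of $v$ and $\delta(G),\Delta(G)$ the minimum and maximum degrees; (bal) with parameter $D$ means $\Delta(G)/\delta(G)\le D$. The lazy random walk $(X_t)$ on $G$ at each step stays put with probability $1/2$ and otherwise moves along a uniformly chosen incident edge; $\Pr_\mu$ denotes its law with $X_0\sim\mu$ ($\Pr_u$ if $X_0=u$). $\pi(v)=d(v)/(2|E|)$ and $\mathbf p^t(u,v)=\Pr_u(X_t=v)$. The uniform mixing time is $t_{\mathrm{mix}}(G)=\min\{t\ge0:\max_{u,v}|\mathbf p^t(u,v)/\pi(v)-1|\le1/2\}$. For nonempty $U\subseteq V$, $\tau_U=\min\{t\ge0:X_t\in U\}$ and for an integer $r\ge 0$, $\mathrm{Cap}_r(U)=\Pr_\pi(\tau_U<r)$. *)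

From Stdlib Require Import Reals Lra Lia List Relations.
Open Scope R_scope.

(* A graph on n vertices {0,...,n-1} is given by an adjacency test
   adj : nat -> nat -> bool (only entries x,y < n matter). *)

Definition simple_graph (n : nat) (adj : nat -> nat -> bool) : Prop :=
  (forall x y, (x < n)%nat -> (y < n)%nat -> adj x y = adj y x) /\
  (forall x, (x < n)%nat -> adj x x = false).

Definition connected (n : nat) (adj : nat -> nat -> bool) : Prop :=
  forall u v, (u < n)%nat -> (v < n)%nat ->
    clos_refl_trans nat (fun x y => (x < n)%nat /\ (y < n)%nat /\ adj x y = true) u v.

Fixpoint nsum (k : nat) (f : nat -> nat) : nat :=
  match k with O => O | S k' => (nsum k' f + f k')%nat end.

Fixpoint fsum (k : nat) (f : nat -> R) : R :=
  match k with O => 0 | S k' => fsum k' f + f k' end.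

Definition deg (n : nat) (adj : nat -> nat -> bool) (v : nat) : nat :=
  nsum n (fun w => if adj v w then 1%nat else 0%nat).

Definition nedges (n : nat) (adj : nat -> nat -> bool) : nat :=
  nsum n (fun y => nsum y (fun x => if adj x y then 1%nat else 0%nat)).

Fixpoint fmaxS (k : nat) (f : nat -> nat) : nat :=
  match k with O => f O | S k' => Nat.max (fmaxS k' f) (f k) end.
Fixpoint fminS (k : nat) (f : nat -> nat) : nat :=
  match k with O => f O | S k' => Nat.min (fminS k' f) (f k) end.

Definition maxdeg (n : nat) (adj : nat -> nat -> bool) : nat :=
  fmaxS (n - 1) (deg n adj).
Definition mindeg (n : nat) (adj : nat -> nat -> bool) : nat :=
  fminS (n - 1) (deg n adj).

Definition balanced (n : nat) (adj : nat -> nat -> bool) (D : R) : Prop :=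
  INR (maxdeg n adj) / INR (mindeg n adj) <= D.

Definition trans (n : nat) (adj : nat -> nat -> bool) (w v : nat) : R :=
  (if Nat.eqb w v then / 2 else 0) +
  (if adj w v then / 2 * / INR (deg n adj w) else 0).

(* probability of the trajectory u, x1, ..., xk (l = [x1;...;xk]) *)
Fixpoint weight (n : nat) (adj : nat -> nat -> bool) (u : nat) (l : list nat) : R :=
  match l with
  | nil => 1
  | x :: l' => trans n adj u x * weight n adj x l'
  end.

(* sum of F over all lists of length k with entries in {0..n-1} *)
Fixpoint pathsum (n k : nat) (F : list nat -> R) : R :=
  match k with
  | O => F nil
  | S k' => fsum n (fun x => pathsum n k' (fun l => F (x :: l)))
  end.

(* p^t(u,v) = Pr_u(X_t = v) *)
Definition pt (n : nat) (adj : nat -> nat -> bool) (t u v : nat) : R :=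
  pathsum n t (fun l => weight n adj u l * (if Nat.eqb (last l u) v then 1 else 0)).

Definition pi (n : nat) (adj : nat -> nat -> bool) (v : nat) : R :=
  INR (deg n adj v) / INR (2 * nedges n adj).

Definition mix_ok (n : nat) (adj : nat -> nat -> bool) (t : nat) : Prop :=
  forall u v, (u < n)%nat -> (v < n)%nat ->
    Rabs (pt n adj t u v / pi n adj v - 1) <= / 2.

Definition is_tmix (n : nat) (adj : nat -> nat -> bool) (t : nat) : Prop :=
  mix_ok n adj t /\ forall s, (s < t)%nat -> ~ mix_ok n adj s.

(* Pr_u(tau_U < t): probability that one of X_0,...,X_{t-1} lies in U *)
Definition hit_prob (n : nat) (adj : nat -> nat -> bool) (U : nat -> bool)
  (u t : nat) : R :=
  match t with
  | O => 0
  | S k => pathsum n k (fun l => weight n adj u l *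
                           (if existsb U (u :: l) then 1 else 0))
  end.

(* Cap_r(U) = Pr_pi(tau_U < r) *)
Definition cap (n : nat) (adj : nat -> nat -> bool) (U : nat -> bool) (r : nat) : R :=
  fsum n (fun v => pi n adj v * hit_prob n adj U v r).

(* Write [H_m(u) = Pr_u(tau_U < m)] and let [s = t_mix].  By the Markov property at time [s]
   and uniform mixing, [p^s(u,v) >= pi(v)/2], so [H_(s+m)(u) >= sum_v p^s(u,v) H_m(v)
   >= Cap_m(U)/2].  The increments of [r |-> Cap_r(U)] are non-increasing, because
   [Cap_(r+1) - Cap_r = Pr_pi(tau_U = r)] and stationarity of [pi] moves the walk one step
   forward; with [Cap_0 = 0] this concavity gives [Cap_m >= (m/r) Cap_r] for [m <= r].
   Taking [m = t_n - s] with [3m >= 2 r_n], which holds eventually since [t_n ~ r_n] and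
   [r_n >> t_mix], yields [Pr_u(tau_U < t_n) >= Cap_(r_n)/3]. *)

From Stdlib Require Import Reals Lra Lia List Relations.
Open Scope R_scope.

Lemma fsum_ext k f g : (forall i, (i < k)%nat -> f i = g i) -> fsum k f = fsum k g.
Proof.
induction k as [|k IH]; intros Hfg; simpl; [reflexivity|].
rewrite IH, Hfg by (intros; try apply Hfg; lia); reflexivity.
Qed.

Lemma fsum_le k f g : (forall i, (i < k)%nat -> f i <= g i) -> fsum k f <= fsum k g.
Proof.
induction k as [|k IH]; intros Hfg; simpl; [lra|].
apply Rplus_le_compat; [apply IH; intros; apply Hfg|apply Hfg]; lia.
Qed.

Lemma fsum_plus k f g : fsum k (fun i => f i + g i) = fsum k f + fsum k g.
Proof. induction k as [|k IH]; simpl; [lra|]. rewrite IH; ring. Qed.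

Lemma fsum_minus k f g : fsum k (fun i => f i - g i) = fsum k f - fsum k g.
Proof. induction k as [|k IH]; simpl; [lra|]. rewrite IH; ring. Qed.

Lemma fsum_scal k c f : fsum k (fun i => c * f i) = c * fsum k f.
Proof. induction k as [|k IH]; simpl; [lra|]. rewrite IH; ring. Qed.

Lemma fsum_zero k : fsum k (fun _ => 0) = 0.
Proof. induction k as [|k IH]; simpl; [lra|]. rewrite IH; ring. Qed.

Lemma fsum_nonneg k f : (forall i, (i < k)%nat -> 0 <= f i) -> 0 <= fsum k f.
Proof. intros Hf. rewrite <- (fsum_zero k). now apply fsum_le. Qed.

Lemma fsum_swap a b f :
  fsum a (fun i => fsum b (fun j => f i j)) = fsum b (fun j => fsum a (fun i => f i j)).
Proof.
induction a as [|a IH]; simpl; [now rewrite fsum_zero|].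
now rewrite IH, <- fsum_plus.
Qed.

Lemma fsum_indicator k u f : (u < k)%nat ->
  fsum k (fun i => (if Nat.eqb i u then 1 else 0) * f i) = f u.
Proof.
induction k as [|k IH]; intros Hu; [lia|]. simpl.
destruct (Nat.eqb k u) eqn:E.
- apply Nat.eqb_eq in E; subst k.
  rewrite (fsum_ext _ _ (fun _ => 0)), fsum_zero; [ring|].
  intros i Hi. destruct (Nat.eqb_spec i u); [lia|ring].
- apply Nat.eqb_neq in E. rewrite IH by lia. ring.
Qed.

Lemma INR_nsum k f : INR (nsum k f) = fsum k (fun i => INR (f i)).
Proof. induction k as [|k IH]; simpl; [reflexivity|]. now rewrite plus_INR, IH. Qed.

Lemma pathsum_ext n k F G : (forall l, F l = G l) -> pathsum n k F = pathsum n k G.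
Proof.
revert F G; induction k as [|k IH]; intros F G HFG; simpl; [apply HFG|].
apply fsum_ext; intros; apply IH; intros; apply HFG.
Qed.

Lemma pathsum_scal n k c F : pathsum n k (fun l => c * F l) = c * pathsum n k F.
Proof.
revert F; induction k as [|k IH]; intros F; simpl; [reflexivity|].
rewrite <- fsum_scal. apply fsum_ext; intros i _. exact (IH (fun l => F (i :: l))).
Qed.

Lemma last_cons_default (x : nat) l d : last (x :: l) d = last l x.
Proof.
revert x d; induction l as [|y l IH]; intros x d; [reflexivity|].
change (last (y :: l) d = last (y :: l) x). now rewrite !IH.
Qed.

Lemma Rinv_INR_nonneg d : 0 <= / INR d.
Proof.
destruct d; [simpl; rewrite Rinv_0; lra|].
apply Rlt_le, Rinv_0_lt_compat, lt_0_INR; lia.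
Qed.

Section LazyWalk.
Variables (n : nat) (adj : nat -> nat -> bool).

Lemma trans_nonneg w v : 0 <= trans n adj w v.
Proof.
unfold trans. pose proof (Rinv_INR_nonneg (deg n adj w)).
destruct (Nat.eqb w v), (adj w v); lra.
Qed.

Lemma pi_nonneg v : 0 <= pi n adj v.
Proof. apply Rmult_le_pos; [apply pos_INR|apply Rinv_INR_nonneg]. Qed.

Lemma pt_0 u v : pt n adj 0 u v = if Nat.eqb v u then 1 else 0.
Proof. unfold pt; simpl. rewrite Nat.eqb_sym. destruct (Nat.eqb v u); ring. Qed.

Lemma pt_S s u v : pt n adj (S s) u v = fsum n (fun x => trans n adj u x * pt n adj s x v).
Proof.
unfold pt; cbn [pathsum]. apply fsum_ext; intros x _.
rewrite <- pathsum_scal. apply pathsum_ext; intros l.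
rewrite last_cons_default; simpl; ring.
Qed.

Hypothesis deg_pos : forall v, (v < n)%nat -> (0 < deg n adj v)%nat.

Lemma INR_deg_neq0 v : (v < n)%nat -> INR (deg n adj v) <> 0.
Proof. intros Hv. apply not_0_INR. specialize (deg_pos v Hv). lia. Qed.

Lemma trans_row_sum v : (v < n)%nat -> fsum n (trans n adj v) = 1.
Proof.
intros Hv.
rewrite (fsum_ext _ _ (fun x => (if Nat.eqb x v then 1 else 0) * / 2
   + / 2 * / INR (deg n adj v) * INR (if adj v x then 1%nat else 0%nat))).
- rewrite fsum_plus, fsum_indicator, fsum_scal, <- INR_nsum by exact Hv.
  fold (deg n adj v). field. now apply INR_deg_neq0.
- intros x _. unfold trans. rewrite Nat.eqb_sym.
  destruct (Nat.eqb x v), (adj v x); simpl; ring.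
Qed.

Hypothesis adj_sym : forall a b, (a < n)%nat -> (b < n)%nat -> adj a b = adj b a.

Lemma deg_trans_stationary x : (x < n)%nat ->
  fsum n (fun v => INR (deg n adj v) * trans n adj v x) = INR (deg n adj x).
Proof.
intros Hx.
rewrite (fsum_ext _ _ (fun v => (if Nat.eqb v x then 1 else 0) * (INR (deg n adj x) * / 2)
   + / 2 * INR (if adj x v then 1%nat else 0%nat))).
- rewrite fsum_plus, fsum_indicator, fsum_scal, <- INR_nsum by exact Hx.
  fold (deg n adj x). field.
- intros v Hv. pose proof (INR_deg_neq0 v Hv).
  unfold trans. rewrite (adj_sym v x Hv Hx).
  destruct (Nat.eqb_spec v x) as [->|_]; [destruct (adj x x)|destruct (adj x v)];
    simpl; field; assumption.
Qed.

Lemma pi_trans_stationary x : (x < n)%nat ->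
  fsum n (fun v => pi n adj v * trans n adj v x) = pi n adj x.
Proof.
intros Hx. unfold pi, Rdiv.
rewrite (fsum_ext _ _ (fun v => / INR (2 * nedges n adj) * (INR (deg n adj v) * trans n adj v x)))
  by (intros; ring).
rewrite fsum_scal, deg_trans_stationary by exact Hx. ring.
Qed.

End LazyWalk.

Section Hitting.
Variables (n : nat) (adj : nat -> nat -> bool) (U : nat -> bool).
Hypothesis row_sum : forall v, (v < n)%nat -> fsum n (trans n adj v) = 1.

Lemma weight_mass k u : (u < n)%nat -> pathsum n k (weight n adj u) = 1.
Proof.
revert u; induction k as [|k IH]; intros u Hu; simpl; [reflexivity|].
rewrite <- (row_sum u Hu). apply fsum_ext; intros x Hx.
rewrite pathsum_scal. change (pathsum n k (fun l => weight n adj x l)) with (pathsum n k (weight n adj x)).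
rewrite IH by exact Hx. ring.
Qed.

Lemma hit_prob_S u k : (u < n)%nat ->
  hit_prob n adj U u (S k) =
  if U u then 1 else fsum n (fun x => trans n adj u x * hit_prob n adj U x k).
Proof.
intros Hu. destruct k as [|k].
- simpl. destruct (U u); simpl; [ring|].
  rewrite (fsum_ext _ _ (fun _ => 0)), fsum_zero by (intros; ring). ring.
- unfold hit_prob; cbn [pathsum]. destruct (U u) eqn:EU.
  + transitivity (fsum n (trans n adj u)); [|apply row_sum, Hu].
    apply fsum_ext; intros x Hx.
    rewrite (pathsum_ext _ _ _ (fun l => trans n adj u x * weight n adj x l))
      by (intros l; simpl; rewrite EU; simpl; ring).
    rewrite pathsum_scal.
    change (pathsum n k (fun l => weight n adj x l)) with (pathsum n k (weight n adj x)).
    rewrite weight_mass by exact Hx. ring.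
  + apply fsum_ext; intros x _. rewrite <- pathsum_scal. apply pathsum_ext; intros l.
    simpl. rewrite EU; simpl; ring.
Qed.

Lemma hit_prob_bounds k u : (u < n)%nat -> 0 <= hit_prob n adj U u k <= 1.
Proof.
revert u; induction k as [|k IH]; intros u Hu; [simpl; lra|].
rewrite hit_prob_S by exact Hu. destruct (U u); [lra|]. split.
- apply fsum_nonneg; intros x Hx.
  apply Rmult_le_pos; [apply trans_nonneg|apply IH, Hx].
- rewrite <- (row_sum u Hu). apply fsum_le; intros x Hx.
  pose proof (trans_nonneg n adj u x). pose proof (IH x Hx). nra.
Qed.

Lemma hit_prob_first_step k u : (u < n)%nat ->
  fsum n (fun x => trans n adj u x * hit_prob n adj U x k) <= hit_prob n adj U u (S k).
Proof.
intros Hu. rewrite hit_prob_S by exact Hu. destruct (U u); [|lra].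
rewrite <- (row_sum u Hu). apply fsum_le; intros x Hx.
pose proof (trans_nonneg n adj u x). pose proof (hit_prob_bounds k x Hx). nra.
Qed.

Lemma hit_prob_S_mono k u : (u < n)%nat -> hit_prob n adj U u k <= hit_prob n adj U u (S k).
Proof.
revert u; induction k as [|k IH]; intros u Hu.
- apply (hit_prob_bounds 1), Hu.
- rewrite !hit_prob_S by exact Hu. destruct (U u); [lra|].
  apply fsum_le; intros x Hx.
  pose proof (trans_nonneg n adj u x). pose proof (IH x Hx). nra.
Qed.

Lemma hit_prob_mono a b u : (u < n)%nat -> (a <= b)%nat ->
  hit_prob n adj U u a <= hit_prob n adj U u b.
Proof.
intros Hu Hab. induction Hab as [|b _ IH]; [lra|].
eapply Rle_trans; [exact IH|apply hit_prob_S_mono, Hu].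
Qed.

(* Markov property at time [s]: hitting within [m] steps after time [s] is one way of
   hitting within [s + m] steps. *)
Lemma hit_prob_markov s m u : (u < n)%nat ->
  fsum n (fun v => pt n adj s u v * hit_prob n adj U v m) <= hit_prob n adj U u (s + m).
Proof.
revert u; induction s as [|s IH]; intros u Hu.
- rewrite (fsum_ext _ _ (fun v => (if Nat.eqb v u then 1 else 0) * hit_prob n adj U v m))
    by (intros; now rewrite pt_0).
  rewrite fsum_indicator by exact Hu. simpl; lra.
- eapply Rle_trans; [|apply (hit_prob_first_step (s + m) u Hu)].
  rewrite (fsum_ext _ _ (fun v => fsum n (fun x =>
             trans n adj u x * (pt n adj s x v * hit_prob n adj U v m)))).
  + rewrite fsum_swap. apply fsum_le; intros x Hx. rewrite fsum_scal.
    apply Rmult_le_compat_l; [apply trans_nonneg|apply IH, Hx].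
  + intros v _. rewrite pt_S, Rmult_comm, <- fsum_scal. apply fsum_ext; intros; ring.
Qed.

Lemma cap_0 : cap n adj U 0 = 0.
Proof. unfold cap; simpl. rewrite (fsum_ext _ _ (fun _ => 0)) by (intros; ring). apply fsum_zero. Qed.

Lemma cap_nonneg k : 0 <= cap n adj U k.
Proof.
apply fsum_nonneg; intros v Hv.
apply Rmult_le_pos; [apply pi_nonneg|apply hit_prob_bounds, Hv].
Qed.

Lemma cap_sub a b : cap n adj U a - cap n adj U b =
  fsum n (fun v => pi n adj v * (hit_prob n adj U v a - hit_prob n adj U v b)).
Proof. unfold cap. rewrite <- fsum_minus. apply fsum_ext; intros; ring. Qed.

Lemma cap_mono a b : (a <= b)%nat -> cap n adj U a <= cap n adj U b.
Proof.
intros Hab.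
cut (0 <= cap n adj U b - cap n adj U a); [lra|].
rewrite cap_sub. apply fsum_nonneg; intros v Hv.
apply Rmult_le_pos; [apply pi_nonneg|].
pose proof (hit_prob_mono a b v Hv Hab). lra.
Qed.

End Hitting.

(* [Cap_(k+1) - Cap_k] is [Pr_pi(tau_U = k)]; one step of the stationary walk turns
   [Pr_pi(tau_U = k+1)] into at most [Pr_pi(tau_U = k)]. *)
Lemma cap_increment_noninc n adj U k :
  (forall v, (v < n)%nat -> (0 < deg n adj v)%nat) ->
  (forall a b, (a < n)%nat -> (b < n)%nat -> adj a b = adj b a) ->
  cap n adj U (S (S k)) - cap n adj U (S k) <= cap n adj U (S k) - cap n adj U k.
Proof.
intros Hdeg Hsym. pose proof (trans_row_sum n adj Hdeg) as Hrow.
set (g := fun x => hit_prob n adj U x (S k) - hit_prob n adj U x k).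
rewrite !cap_sub.
apply Rle_trans with (fsum n (fun v => pi n adj v * fsum n (fun x => trans n adj v x * g x))).
- apply fsum_le; intros v Hv. apply Rmult_le_compat_l; [apply pi_nonneg|].
  rewrite (hit_prob_S n adj U Hrow v (S k)), (hit_prob_S n adj U Hrow v k) by exact Hv.
  destruct (U v).
  + replace (1 - 1) with 0 by ring. apply fsum_nonneg; intros x Hx.
    apply Rmult_le_pos; [apply trans_nonneg|].
    unfold g. pose proof (hit_prob_S_mono n adj U Hrow k x Hx). lra.
  + rewrite <- fsum_minus. apply fsum_le; intros x _. unfold g; lra.
- rewrite (fsum_ext _ _ (fun v => fsum n (fun x => g x * (pi n adj v * trans n adj v x)))).
  + rewrite fsum_swap. apply fsum_le; intros x Hx.
    rewrite fsum_scal, pi_trans_stationary by assumption. unfold g; lra.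
  + intros v _. rewrite <- fsum_scal. apply fsum_ext; intros; ring.
Qed.

Lemma concave_chord (a : nat -> R) : a 0%nat = 0 ->
  (forall k, a (S (S k)) - a (S k) <= a (S k) - a k) ->
  forall m r, (m <= r)%nat -> INR m * a r <= INR r * a m.
Proof.
intros Ha0 Hconc.
assert (Hinc : forall k, INR k * (a (S k) - a k) <= a k).
{ induction k as [|k IH]; [simpl; lra|]. rewrite S_INR.
  pose proof (Hconc k). pose proof (pos_INR k).
  assert ((INR k + 1) * (a (S (S k)) - a (S k)) <= (INR k + 1) * (a (S k) - a k))
    by (apply Rmult_le_compat_l; lra).
  lra. }
intros m r Hmr. induction Hmr as [|r Hmr IH]; [lra|].
destruct (Nat.eq_dec r 0) as [->|Hr0].
- replace m with 0%nat by lia. rewrite Ha0. simpl; lra.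
- pose proof (Hinc r). pose proof (pos_INR m).
  assert (Hrpos : 0 < INR r) by (apply lt_0_INR; lia).
  rewrite S_INR. apply Rmult_le_reg_l with (INR r); [exact Hrpos|].
  apply Rle_trans with (INR m * ((INR r + 1) * a r)); nra.
Qed.

Lemma mix_ok_pi_pos n adj s : mix_ok n adj s -> forall v, (v < n)%nat -> 0 < pi n adj v.
Proof.
intros Hmix v Hv. destruct (Rle_lt_or_eq_dec _ _ (pi_nonneg n adj v)) as [Hpos|Hzero]; [exact Hpos|].
exfalso. specialize (Hmix v v Hv Hv). rewrite <- Hzero in Hmix.
unfold Rdiv in Hmix. rewrite Rinv_0, Rmult_0_r in Hmix.
unfold Rabs in Hmix. destruct (Rcase_abs _) in Hmix; lra.
Qed.

Lemma mix_ok_pt_lower n adj s u v : mix_ok n adj s -> (u < n)%nat -> (v < n)%nat ->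
  pi n adj v / 2 <= pt n adj s u v.
Proof.
intros Hmix Hu Hv. pose proof (mix_ok_pi_pos n adj s Hmix v Hv) as Hpi.
specialize (Hmix u v Hu Hv).
assert (Hratio : pt n adj s u v / pi n adj v >= 1 / 2).
{ unfold Rabs in Hmix. destruct (Rcase_abs _); lra. }
replace (pt n adj s u v) with (pt n adj s u v / pi n adj v * pi n adj v) by (field; lra).
nra.
Qed.

Lemma deg_pos_of_pi_pos n adj : (forall v, (v < n)%nat -> 0 < pi n adj v) ->
  forall v, (v < n)%nat -> (0 < deg n adj v)%nat.
Proof.
intros Hpi v Hv. specialize (Hpi v Hv). unfold pi in Hpi.
destruct (deg n adj v); [|lia]. simpl in Hpi. unfold Rdiv in Hpi. lra.
Qed.

Lemma hit_prob_ge_third_cap n adj U s r t u :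
  (forall a b, (a < n)%nat -> (b < n)%nat -> adj a b = adj b a) -> mix_ok n adj s ->
  (0 < r)%nat -> (2 * r + 3 * s <= 3 * t)%nat -> (u < n)%nat ->
  hit_prob n adj U u t >= / 3 * cap n adj U r.
Proof.
intros Hsym Hmix Hr Hbudget Hu.
pose proof (deg_pos_of_pi_pos n adj (mix_ok_pi_pos n adj s Hmix)) as Hdeg.
pose proof (trans_row_sum n adj Hdeg) as Hrow.
set (m := (t - s)%nat). replace t with (s + m)%nat by (unfold m; lia).
assert (Hhalf : cap n adj U m / 2 <= hit_prob n adj U u (s + m)).
{ eapply Rle_trans; [|apply (hit_prob_markov n adj U Hrow s m u Hu)].
  unfold cap, Rdiv. rewrite Rmult_comm, <- fsum_scal. apply fsum_le; intros v Hv.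
  pose proof (mix_ok_pt_lower n adj s u v Hmix Hu Hv).
  pose proof (hit_prob_bounds n adj U Hrow m v Hv). nra. }
pose proof (cap_nonneg n adj U Hrow r).
destruct (Compare_dec.le_lt_dec r m) as [Hrm|Hmr].
- pose proof (cap_mono n adj U Hrow r m Hrm). lra.
- pose proof (concave_chord (cap n adj U) (cap_0 n adj U)
                (fun k => cap_increment_noninc n adj U k Hdeg Hsym) m r
                (Nat.lt_le_incl _ _ Hmr)) as Hchord.
  assert (H3m : 2 * INR r <= 3 * INR m).
  { replace 3 with (INR 3) by (simpl; ring). replace 2 with (INR 2) by (simpl; ring).
    rewrite <- !mult_INR. apply le_INR. unfold m. lia. }
  assert (Hrpos : 0 < INR r) by (apply lt_0_INR; lia).
  assert (Hscaled : INR r * (2 / 3 * cap n adj U r) <= INR r * cap n adj U m) by nra.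
  apply Rmult_le_reg_l in Hscaled; [lra|exact Hrpos].
Qed.

Lemma eventually_ratio_ge (t r : nat -> nat) :
  (forall n, (0 < r n)%nat) -> Un_cv (fun n => INR (t n) / INR (r n)) 1 ->
  exists N, forall n, (N <= n)%nat -> 9 / 10 * INR (r n) <= INR (t n).
Proof.
intros Hr Hlim. destruct (Hlim (1 / 10)) as [N HN]; [lra|].
exists N. intros n Hn. specialize (HN n Hn).
assert (Hrpos : 0 < INR (r n)) by (apply lt_0_INR, Hr).
unfold Rdist in HN. apply Rabs_def2 in HN as [_ Hlow].
replace (INR (t n)) with (INR (t n) / INR (r n) * INR (r n)) by (field; lra).
nra.
Qed.

Lemma eventually_tmix_small (r tm : nat -> nat) :
  (forall M : R, exists N : nat, forall n, (N <= n)%nat ->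
     INR (r n) / (ln (INR n) * INR (tm n)) > M) ->
  exists N, forall n, (N <= n)%nat -> 20 * INR (tm n) <= INR (r n).
Proof.
intros Hlim. destruct (Hlim 20) as [N HN].
exists (Nat.max 4 N). intros n Hn. specialize (HN n ltac:(lia)).
assert (Hln : 1 < ln (INR n)).
{ rewrite <- ln_exp with 1. apply ln_increasing; [apply exp_pos|].
  assert (4 <= INR n) by (replace 4 with (INR 4) by (simpl; ring); apply le_INR; lia).
  pose proof exp_le_3. lra. }
destruct (tm n) as [|k]; [simpl; pose proof (pos_INR (r n)); lra|].
assert (Hk : 0 < INR (S k)) by (apply lt_0_INR; lia).
assert (Hden : 0 < ln (INR n) * INR (S k)) by nra.
replace (INR (r n)) with (INR (r n) / (ln (INR n) * INR (S k)) * (ln (INR n) * INR (S k)))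
  by (field; lra).
assert (Hscale : INR (S k) <= ln (INR n) * INR (S k)) by nra.
nra.
Qed.

Theorem mainTheorem4
  (G : nat -> nat -> nat -> bool) (D : R)
  (tm : nat -> nat) (r t : nat -> nat)
  (HG : forall n, (2 <= n)%nat ->
     simple_graph n (G n) /\ connected n (G n) /\ balanced n (G n) D)
  (Htm : forall n, (2 <= n)%nat -> is_tmix n (G n) (tm n))
  (Hr : forall n, (0 < r n)%nat)
  (Ht : forall n, (0 < t n)%nat)
  (Hrlim : forall M : R, exists N : nat, forall n, (N <= n)%nat ->
     INR (r n) / (ln (INR n) * INR (tm n)) > M)
  (Htlim : Un_cv (fun n => INR (t n) / INR (r n)) 1) :
  exists n0 : nat, forall n, (n0 <= n)%nat ->
    forall (u : nat) (U : nat -> bool), (u < n)%nat ->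
      (exists v, (v < n)%nat /\ U v = true) ->
      hit_prob n (G n) U u (t n) >= / 3 * cap n (G n) U (r n).
Proof.
destruct (eventually_ratio_ge t r Hr Htlim) as [N1 HN1].
destruct (eventually_tmix_small r tm Hrlim) as [N2 HN2].
exists (Nat.max 2 (Nat.max N1 N2)). intros n Hn u U Hu _.
destruct (HG n ltac:(lia)) as [[Hsym _] _].
destruct (Htm n ltac:(lia)) as [Hmix _].
apply (hit_prob_ge_third_cap n (G n) U (tm n)); [exact Hsym|exact Hmix|apply Hr| |exact Hu].
specialize (HN1 n ltac:(lia)). specialize (HN2 n ltac:(lia)).
apply INR_le. rewrite !plus_INR, !mult_INR. simpl INR.
pose proof (pos_INR (r n)). lra.
Qed.
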